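(* Let $1\le k\le N$ and let $\mathscr{K}$ be a collection of compact subsets of $\mathbb{C}^N$ totally ordered by inclusion, and let $K_\infty=\bigcap_{K\in\mathscr{K}}K$. Then $\widehat{K_\infty}^{\,k}=\bigcap_{K\in\mathscr{K}}\widehat{K}^{\,k}$ and $h_r^k(K_\infty)=\bigcap_{K\in\mathscr{K}}h_r^k(K)$.
   Context: Let $X\subset\mathbb{C}^N$ be compact. An analytic subvariety of $\mathbb{C}^N$ of pure codimension $m$ means a pure-dimensional analytic subvariety of $\mathbb{C}^N$ of dimension $N-m$. The polynomial hull is $\widehat{X}=\{z: |p(z)|\le\max_X|p| \text{ for all polynomials } p\}$. For $1\le k\le N$, the $k$-rational hull $h_r^k(X)$ is the set of $z\in\mathbb{C}^N$ such that every analytic subvariety of $\mathbb{C}^N$ of pure codimension $\le k$ that passes through $z$ intersects $X$. The $1$-polynomial hull is $\widehat{X}^{\,1}=\widehat{X}$; for $2\le k\le N$ the $k$-polynomial hull $\widehat{X}^{\,k}$ is the set of $z\in\mathbb{C}^N$ such that $z\in h_r^{k-1}(X)$ and $z\in\widehat{X\cap V}$ for every analytic subvariety $V$ of $\mathbb{C}^N$ of pure codimension $\le k-1$ passing through $z$. *)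

(* C = R[i] (complex numbers over an
   arbitrary realType R, from mathcomp-real-closed), C^N = 'rV[R[i]]_N with its
   normed-space topology over R[i] (sup norm = Euclidean topology). *)
From HB Require Import structures.
From mathcomp Require Import all_boot all_order all_algebra.
From mathcomp Require Import all_classical all_reals all_analysis.
From mathcomp Require Import complex.
From mathcomp Require mpoly.
Import numFieldNormedType.Exports.
Import Order.TTheory GRing.Theory Num.Theory.

Set Implicit Arguments.
Unset Strict Implicit.
Unset Printing Implicit Defensive.

Local Open Scope ring_scope.
Local Open Scope classical_set_scope.

Definition CN (R : realType) (N : nat) : normedModType R[i] := 'rV[R[i]]_N.

Section Defs.
Variables (R : realType) (N : nat).
Local Notation V := (CN R N).

Definition poly_eval (p : mpoly.mpoly N R[i]) (z : V) : R[i] :=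
  mpoly.meval (fun j => z ord0 j) p.

(* polynomial hull: |p(z)| <= max_X |p| for every polynomial p
   (written as: every bound c of |p| on X bounds |p(z)|). *)
Definition poly_hull (X : set V) : set V :=
  [set z | forall (p : mpoly.mpoly N R[i]) (c : R[i]),
     (forall x, X x -> `|poly_eval p x| <= c) -> `|poly_eval p z| <= c].

(* g : C^N -> C^m is holomorphic on U: complex (R[i]-linear) Frechet
   differentiable at every point of U. *)
Definition holomorphic_on (m : nat) (U : set V) (g : V -> CN R m) : Prop :=
  forall z, U z -> differentiable g z.

Definition analytic_set (A : set V) : Prop :=
  forall a : V, exists (U : set V) (m : nat) (g : V -> CN R m),
    [/\ open U, U a, holomorphic_on U g &
        A `&` U = [set z | U z /\ g z = 0]].

(* a is a regular point of A at which A is a complex submanifold of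
   codimension c (dimension N - c): near a, A is the zero set of c holomorphic
   functions with C-linearly independent differentials. *)
Definition regular_point_codim (A : set V) (c : nat) (a : V) : Prop :=
  A a /\ exists (U : set V) (g : V -> CN R c),
    [/\ open U, U a, holomorphic_on U g,
        (forall z, U z -> forall w : CN R c, exists v : V, 'd g z v = w) &
        A `&` U = [set z | U z /\ g z = 0]].

(* dim_a A = N - m, where dim_a A = limsup_{z -> a, z in reg A} dim_z A. *)
Definition local_codim (A : set V) (a : V) (m : nat) : Prop :=
  (forall W, nbhs a W -> exists z, W z /\ regular_point_codim A m z) /\
  (exists W, nbhs a W /\
     forall z c, W z -> regular_point_codim A c z -> (m <= c)%N).

Definition pure_codim_subvariety (A : set V) (m : nat) : Prop :=
  [/\ (m <= N)%N, analytic_set A & forall a, A a -> local_codim A a m].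

Definition rat_hull (k : nat) (X : set V) : set V :=
  [set z | forall (A : set V) (m : nat), (m <= k)%N ->
     pure_codim_subvariety A m -> A z -> A `&` X !=set0].

Definition k_poly_hull (k : nat) (X : set V) : set V :=
  if (k <= 1)%N then poly_hull X else
  [set z | rat_hull k.-1 X z /\
     forall (A : set V) (m : nat), (m <= k.-1)%N ->
       pure_codim_subvariety A m -> A z -> poly_hull (X `&` A) z].

End Defs.

Arguments poly_eval {R N}.
Arguments poly_hull {R N}.
Arguments holomorphic_on {R N m}.
Arguments analytic_set {R N}.
Arguments regular_point_codim {R N}.
Arguments local_codim {R N}.
Arguments pure_codim_subvariety {R N}.
Arguments rat_hull {R N}.
Arguments k_poly_hull {R N}.

(* Each hull of X is cut out by conditions of the form "a closed set C meets X"
   (C an analytic subvariety) or "|p| <= c on X forces |p(z)| <= c", and the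
   sublevel sets {|p| < c} are open.  For a chain of compact sets, an open set
   containing the intersection (relative to a closed C) already contains some
   member of the chain, by the finite intersection property; hence every such
   condition satisfied by all members of the chain is satisfied by their
   intersection.  The other inclusions are monotonicity of the hulls. *)

From HB Require Import structures.
From mathcomp Require Import all_boot all_order all_algebra.
From mathcomp Require Import all_classical all_reals all_analysis.
From mathcomp Require Import complex.
From mathcomp Require mpoly.
Import numFieldNormedType.Exports numFieldTopology.Exports.
Import Order.TTheory GRing.Theory Num.Theory.

Set Implicit Arguments.
Unset Strict Implicit.
Unset Printing Implicit Defensive.

Local Open Scope classical_set_scope.
Local Open Scope ring_scope.

Section PolynomialContinuity.
Variables (K : numFieldType) (n : nat).

Lemma continuous_meval (p : mpoly.mpoly n K) :
  continuous (fun x : 'rV[K]_n => mpoly.meval (fun j => x ord0 j) p).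
Proof.
have -> : (fun x : 'rV[K]_n => mpoly.meval (fun j => x ord0 j) p) =
    \sum_(m <- mpoly.msupp p) (cst (mpoly.mcoeff m p) *
      \prod_(j < n) (fun x : 'rV[K]_n => x ord0 j) ^+ mpoly.fun_of_multinom m j).
  apply/funext => x; rewrite mpoly.mevalE fct_sumE; apply: eq_bigr => m _.
  by rewrite mulrfctE fct_prodE; under [in RHS]eq_bigr do rewrite exprfctE.
have coordX j k : continuous (fun x : 'rV[K]_n => x ord0 j ^+ k).
  elim: k => [|k IH] x.
    by under eq_fun do rewrite expr0; exact: cst_continuous.
  under eq_fun do rewrite exprS; apply: continuousM (IH x).
  exact: (@coord_continuous K 1 n ord0 j).
apply: (big_ind (fun f => continuous f)) => [|f g cf cg x|m _ x].
- exact: cst_continuous.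
- exact: continuousD (cf x) (cg x).
apply: continuousM; first exact: cst_continuous.
apply: (big_ind (fun f => continuous f)) x => [|f g cf cg x|j _].
- exact: cst_continuous.
- exact: continuousM (cf x) (cg x).
by rewrite exprfctE; apply: coordX.
Qed.

Lemma open_meval_norm_lt (p : mpoly.mpoly n K) (c : K) :
  open [set x : 'rV[K]_n | `|mpoly.meval (fun j => x ord0 j) p| < c].
Proof.
have -> : [set x : 'rV[K]_n | `|mpoly.meval (fun j => x ord0 j) p| < c] =
    (fun x : 'rV[K]_n => mpoly.meval (fun j => x ord0 j) p) @^-1` ball 0 c.
  by apply/seteqP; split => x; rewrite /= -ball_normE /= sub0r normrN.
by apply: open_comp (ball_open _ _) => x _; apply: continuous_meval.
Qed.

End PolynomialContinuity.

Section CompactChain.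
Variables (T : topologicalType) (Kc : set (set T)).
Hypotheses (T_hausdorff : hausdorff_space T)
  (Kc_compact : forall K, Kc K -> compact K)
  (Kc_chain : forall K1 K2, Kc K1 -> Kc K2 -> K1 `<=` K2 \/ K2 `<=` K1)
  (Kc_neq0 : Kc !=set0).

Lemma chain_bigcap_subset_open (O : set T) :
  open O -> \bigcap_(K in Kc) K `<=` O -> exists2 K, Kc K & K `<=` O.
Proof.
move=> oO capO; apply: contrapT => noK.
have meetsC K : Kc K -> (K `&` ~` O) !=set0.
  by move=> KK; apply: nonsubset => KO; apply: noK; exists K.
pose F := filter_from Kc (fun K => K `&` ~` O).
have F_proper : ProperFilter F.
  apply: filter_from_proper; last by move=> K /meetsC.
  apply: filter_from_filter Kc_neq0 _ => K1 K2 KK1 KK2.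
  by case: (Kc_chain KK1 KK2) => s12; [exists K1 | exists K2] => // x [] Kx nOx;
    do !split => //; apply: s12.
have [K0 KK0] := Kc_neq0.
have FK0 : F K0 by exists K0 => //; apply: subIsetl.
have [x [_ clx]] := Kc_compact KK0 F_proper FK0.
suff inKO K : Kc K -> (K `&` ~` O) x.
  by have [_ nOx] := inKO K0 KK0; apply: nOx; apply: capO => K /inKO [].
move=> KK; have clKO : closed (K `&` ~` O).
  by apply: closedI; [exact: compact_closed (Kc_compact KK) | rewrite closedC].
move/closure_id: clKO => -> B Bx.
have FKO : F (K `&` ~` O) by exists K.
by have [y [[? ?] ?]] := clx _ _ FKO Bx; exists y.
Qed.

Lemma chain_bigcapI_subset_open (C O : set T) : closed C -> open O ->
  \bigcap_(K in Kc) K `&` C `<=` O -> exists2 K, Kc K & K `&` C `<=` O.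
Proof.
move=> clC oO capCO.
have oCO : open (~` C `|` O) by apply: openU => //; rewrite openC.
have capCO' : \bigcap_(K in Kc) K `<=` ~` C `|` O.
  by move=> x capx; have [Cx|nCx] := pselect (C x); [right; apply: capCO | left].
have [K KK KCO] := chain_bigcap_subset_open oCO capCO'.
by exists K => // x [/KCO [] ].
Qed.

End CompactChain.

Section Hulls.
Variables (R : realType) (N : nat).
Local Notation V := (CN R N).
Implicit Types (X Y A : set V) (k : nat).

Lemma analytic_set_closed A : analytic_set A -> closed A.
Proof.
move=> anA; rewrite -openC openE => a nAa.
have [U [m [g [oU Ua hg AU]]]] := anA a.
have ga : g a != 0.
  by apply/eqP => ga0; apply: nAa; have [] : (A `&` U) a by rewrite AU.
have gz : \forall z \near a, g z != 0.
  exact: cvgr_neq0 (differentiable_continuous (hg a Ua)) ga.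
apply: filterS (filterI (open_nbhs_nbhs (conj oU Ua)) gz) => z [Uz /eqP gz0] Az.
by have : (A `&` U) z by []; rewrite AU => -[].
Qed.

Lemma poly_hullS X Y : X `<=` Y -> poly_hull X `<=` poly_hull Y.
Proof. by move=> XY z hz p c hc; apply: hz => x /XY /hc. Qed.

Lemma rat_hullS k X Y : X `<=` Y -> rat_hull k X `<=` rat_hull k Y.
Proof.
move=> XY z hz A m hm hA Az; have [x [Ax Xx]] := hz A m hm hA Az.
by exists x; split => //; apply: XY.
Qed.

Lemma subset_poly_hull X : X `<=` poly_hull X.
Proof. by move=> z Xz p c; apply. Qed.

Lemma subset_rat_hull k X : X `<=` rat_hull k X.
Proof. by move=> z Xz A m _ _ Az; exists z. Qed.

Variable Kc : set (set V).
Hypotheses (Kc_compact : forall K, Kc K -> compact K)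
  (Kc_chain : forall K1 K2, Kc K1 -> Kc K2 -> K1 `<=` K2 \/ K2 `<=` K1).

Lemma rat_hull_bigcap_chain k :
  rat_hull k (\bigcap_(K in Kc) K) = \bigcap_(K in Kc) rat_hull k K.
Proof.
apply/seteqP; split => [z hz K KK | z hz].
  exact: rat_hullS (bigcap_inf KK) _ hz.
have [Kc_neq0|Kc0] := pselect (Kc !=set0); last first.
  by apply: subset_rat_hull => K KK; case: Kc0; exists K.
move=> A m hm hA Az; apply: contrapT => noAcap; have [_ anA _] := hA.
have [K KK KA0] : exists2 K, Kc K & K `&` A `<=` set0.
  apply: (chain_bigcapI_subset_open (@norm_hausdorff _ V) Kc_compact Kc_chain
    Kc_neq0 (analytic_set_closed anA) open0) => x [capx Ax].
  by apply: noAcap; exists x.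
by have [x [Ax Kx]] := hz K KK A m hm hA Az; apply: (KA0 x).
Qed.

Lemma poly_hull_bigcapI_chain C z : closed C -> C z ->
  (forall K, Kc K -> poly_hull (K `&` C) z) ->
  poly_hull (\bigcap_(K in Kc) K `&` C) z.
Proof.
move=> clC Cz hz; have [Kc_neq0|Kc0] := pselect (Kc !=set0); last first.
  by apply: subset_poly_hull; split => // K KK; case: Kc0; exists K.
have chain_open := chain_bigcapI_subset_open (@norm_hausdorff _ V)
  Kc_compact Kc_chain Kc_neq0 clC.
move=> p c bound.
(* If the intersection is empty, [c] is arbitrary (possibly not real), but
   then some [K `&` C] is already empty. *)
have [[x0 capCx0]|capC0] :=
  pselect (\bigcap_(K in Kc) K `&` C !=set0); last first.
  have [K KK KC0] : exists2 K, Kc K & K `&` C `<=` set0.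
    by apply: chain_open open0 _ => x capCx; apply: capC0; exists x.
  by apply: (hz K KK) => x /KC0.
have c_ge0 : 0 <= c := le_trans (normr_ge0 _) (bound x0 capCx0).
apply: contrapT => /negP; rewrite -real_ltNge ?ger0_real // => c_lt.
have [lt1 lt2] := midf_lt c_lt; set c' := (_ / 2) in lt1 lt2.
have [K KK KCp] := chain_open _ (@open_meval_norm_lt _ _ p c')
  (fun x capCx => le_lt_trans (bound x capCx) lt1).
by have /le_gtF := hz K KK p c' (fun x KCx => ltW (KCp x KCx)); rewrite lt2.
Qed.

Lemma k_poly_hull_bigcap_chain k :
  k_poly_hull k (\bigcap_(K in Kc) K) = \bigcap_(K in Kc) k_poly_hull k K.
Proof.
rewrite /k_poly_hull; case: ifP => _; apply/seteqP; split.
- by move=> z hz K KK; apply: poly_hullS (bigcap_inf KK) _ hz.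
- move=> z hz; rewrite -[\bigcap_(K in Kc) K]setIT.
  by apply: poly_hull_bigcapI_chain closedT I _ => K KK; rewrite setIT; apply: hz.
- move=> z [hr hp] K KK; split; first exact: rat_hullS (bigcap_inf KK) _ hr.
  move=> A m hm hA Az; apply: poly_hullS (hp A m hm hA Az).
  by apply: setSI; apply: bigcap_inf.
- move=> z hz; split; first by rewrite rat_hull_bigcap_chain => K /hz [].
  move=> A m hm hA Az; have [_ anA _] := hA.
  apply: poly_hull_bigcapI_chain (analytic_set_closed anA) _ _ => // K KK.
  by have [_ hpK] := hz K KK; apply: hpK hm hA Az.
Qed.

End Hulls.

Theorem lemma4p1 (R : realType) (N k : nat) (Kc : set (set (CN R N))) :
  (1 <= k <= N)%N ->
  (forall K, Kc K -> compact K) ->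
  (forall K1 K2, Kc K1 -> Kc K2 -> K1 `<=` K2 \/ K2 `<=` K1) ->
  k_poly_hull k (\bigcap_(K in Kc) K) = \bigcap_(K in Kc) k_poly_hull k K /\
  rat_hull k (\bigcap_(K in Kc) K) = \bigcap_(K in Kc) rat_hull k K.
Proof.
move=> _ Kc_compact Kc_chain.
by split; [apply: k_poly_hull_bigcap_chain | apply: rat_hull_bigcap_chain].
Qed.
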